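(* Let a countable group $G$ act continuously on a Polish space $X$, let $\Phi=(\ell,\phi,\mathcal{Z},\Gamma,\mathcal{H})$ be a chart for $G$, and let $E$ be an equivalence relation on $X$. If $X^{\mathcal{H}}$ is clopen and $E$ is $G$-clopen, then $\partial_i^\Phi(E,A)$ is clopen for every centered rectangle $A\subseteq\mathrm{dom}(\phi)$ and every $1\le i\le\ell$.
   Context: Rectangles: Let $\Gamma$ be a finite additive abelian group with identity $0_\Gamma$ and $\ell\in\mathbb{N}$. Elements of $\mathbb{Z}^\ell\times\Gamma$ have integer coordinates $v_1,\dots,v_\ell$ and $v_{\ell+1}\in\Gamma$; $\mathbf{0}$ has first $\ell$ coordinates $0$ and last coordinate $0_\Gamma$; $e_i$ has $i$-th coordinate $1$, other integer coordinates $0$, last coordinate $0_\Gamma$; for $\lambda$ real, $\lambda\cdot v$ scales the first $\ell$ coordinates. $\mathrm{Rec}(a)=\{b\in\mathbb{Z}^\ell\times\Gamma: -|a_i|\le b_i\le|a_i|,\ 1\le i\le\ell\}$. A rectangle is $c+\mathrm{Rec}(a)$, $c,a\in\mathbb{Z}^\ell\times\Gamma$; uniquely written with center $c\in\mathbb{Z}^\ell\times\{0_\Gamma\}$ and radius vector $\mathrm{L}(A)=a\in\mathbb{N}^\ell\times\{0_\Gamma\}$, entries $\mathrm{L}_i(A)$. Centered means center $\mathbf{0}$. $A^i=c+\mathrm{Rec}(\mathrm{L}(A)-\mathrm{L}_i(A)\cdot e_i)$ where $c$ is the center of $A$. Sums are elementwise. $\lambda\cdot A=c+\mathrm{Rec}(\lambda\cdot\mathrm{L}(A))$.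 Charts: a chart for $G$ is $\Phi=(\ell,\phi,\mathcal{Z},\Gamma,\mathcal{H})$ with $\mathcal{H}$ a finite collection of pairwise conjugate subgroups of $G$, $\Gamma$ finite abelian, $\mathcal{Z}$ a centered rectangle with all $\mathrm{L}_i(\mathcal{Z})>0$, $\phi$ an injective map into $G$ with $\mathrm{dom}(\phi)$ a centered rectangle containing $3\cdot\mathcal{Z}$, $\phi(\mathbf{0})=1_G$, and for all $r,s\in\mathrm{dom}(\phi)$, $H\in\mathcal{H}$: $\phi(r)H=\phi(s)H\Rightarrow r=s$; $r+s+\mathcal{Z}\subseteq\mathrm{dom}(\phi)\Rightarrow\exists z\in\mathcal{Z}:\phi(r)\phi(s)H=\phi(r+s+z)H$; $r-s+\mathcal{Z}\subseteq\mathrm{dom}(\phi)\Rightarrow\exists z:\phi(r)\phi(s)^{-1}H=\phi(r-s+z)H$; $-r+s+\mathcal{Z}\subseteq\mathrm{dom}(\phi)\Rightarrow\exists z:\phi(r)^{-1}\phi(s)H=\phi(-r+s+z)H$; $-s+\mathcal{Z}\subseteq\mathrm{dom}(\phi)\Rightarrow\exists z:\phi(s)^{-1}H=\phi(-s+z)H$. $\phi(S)\cdot x=\{\phi(s)\cdot x: s\in S\}$; $X^{\mathcal{H}}=\{x\in X:\mathrm{Stab}(x)\in\mathcal{H}\}$. Boundary: for $E$ an equivalence relation on $X$, $A\subseteq\mathrm{dom}(\phi)$ centered and $1\le i\le\ell$, $\partial_i^\Phi(E,A)$ is the set of $x\in X^{\mathcal{H}}$ with $[\phi(A^i-\mathrm{L}_i(A)\cdot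 e_i)\cdot x]_E\cap[\phi(A^i+\mathrm{L}_i(A)\cdot e_i)\cdot x]_E=\varnothing$, where $[Y]_E$ is the $E$-saturation of $Y$. $G$-clopen: a relation $R\subseteq X\times X$ is $G$-clopen if for each $g\in G$ the set $\{x:(x,g\cdot x)\in R\}$ is clopen. *)

From HB Require Import structures.
From mathcomp Require Import all_boot all_order all_algebra.
From mathcomp Require Import all_classical topology.
From Stdlib Require Rdefinitions.
Local Notation R := Rdefinitions.R.
Local Notation Rle := Rdefinitions.Rle.
Local Notation Rlt := Rdefinitions.Rlt.
Local Notation Rplus := Rdefinitions.Rplus.
Local Notation R0 := Rdefinitions.R0.

Set Implicit Arguments.
Unset Strict Implicit.
Unset Printing Implicit Defensive.

Import Order.TTheory GRing.Theory Num.Theory.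
Local Open Scope classical_set_scope.

Definition polish_space (X : topologicalType) : Prop :=
  (exists D : set X, countable D /\ closure D = setT) /\
  exists d : X -> X -> R,
    (forall x y, Rle R0 (d x y)) /\
    (forall x y, d x y = R0 <-> x = y) /\
    (forall x y, d x y = d y x) /\
    (forall x y z, Rle (d x z) (Rplus (d x y) (d y z))) /\
    (forall A : set X, open A <->
       (forall x, A x -> exists e : R, Rlt R0 e /\ [set y | Rlt (d x y) e] `<=` A)) /\
    (forall u : nat -> X,
       (forall e : R, Rlt R0 e -> exists N : nat, forall m n, (N <= m)%N -> (N <= n)%N ->
          Rlt (d (u m) (u n)) e) ->
       exists x : X, forall e : R, Rlt R0 e -> exists N : nat, forall n, (N <= n)%N ->
          Rlt (d (u n) x) e).

Definition continuous_action (G : groupType) (X : topologicalType)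
    (act : G -> X -> X) : Prop :=
  (forall x, act 1%g x = x) /\
  (forall g h x, act (g * h)%g x = act g (act h x)) /\
  (forall g, continuous (act g)).

Definition subgroup (G : groupType) (H : set G) : Prop :=
  H 1%g /\ (forall g h, H g -> H h -> H (g * h)%g) /\ (forall g, H g -> H (g^-1)%g).

Definition lcoset (G : groupType) (g : G) (H : set G) : set G :=
  [set (g * h)%g | h in H].

Definition conj_set (G : groupType) (H : set G) (g : G) : set G :=
  [set (g * h * g^-1)%g | h in H].

Definition stab (G : groupType) (X : Type) (act : G -> X -> X) (x : X) : set G :=
  [set g | act g x = x].

Definition XH (G : groupType) (X : Type) (act : G -> X -> X) (Hs : set (set G)) : set X :=
  [set x | Hs (stab act x)].

(* (coordinate i of the paper is index i-1 here).                     *)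
Definition vec (l : nat) (Gm : finZmodType) := ({ffun 'I_l -> int} * Gm)%type.

Definition vzero l (Gm : finZmodType) : vec l Gm := ([ffun=> 0%R], 0%R).
Definition vadd l (Gm : finZmodType) (u v : vec l Gm) : vec l Gm :=
  ([ffun i => (u.1 i + v.1 i)%R], (u.2 + v.2)%R).
Definition vopp l (Gm : finZmodType) (u : vec l Gm) : vec l Gm :=
  ([ffun i => (- u.1 i)%R], (- u.2)%R).
Definition vsub l (Gm : finZmodType) (u v : vec l Gm) : vec l Gm := vadd u (vopp v).

Definition vei l (Gm : finZmodType) (k : nat) (i : 'I_l) : vec l Gm :=
  ([ffun j => if j == i then (k%:Z)%R else 0%R], 0%R).

Definition Rec l (Gm : finZmodType) (a : 'I_l -> nat) : set (vec l Gm) :=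
  [set b : vec l Gm | forall i, (- (a i)%:Z <= b.1 i)%R /\ (b.1 i <= (a i)%:Z)%R].

Arguments Rec {l} Gm a.
Arguments vei {l} Gm k i.
Arguments vzero l Gm.

Definition vtrans l (Gm : finZmodType) (c : vec l Gm) (S : set (vec l Gm)) : set (vec l Gm) :=
  [set vadd c s | s in S].

Definition drop_rad l (a : 'I_l -> nat) (i : 'I_l) : 'I_l -> nat :=
  fun j => if j == i then 0%N else a j.

Definition scale_rad l (k : nat) (a : 'I_l -> nat) : 'I_l -> nat := fun j => (k * a j)%N.

(* Charts Phi = (l, phi, Z, Gamma, Hs):                               *)
(*   dom(phi) = Rec dom, Z = Rec z.                                   *)
Definition is_chart (G : groupType) (l : nat) (Gm : finZmodType)
    (phi : vec l Gm -> G) (dom z : 'I_l -> nat) (Hs : set (set G)) : Prop :=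
  finite_set Hs /\
  (forall H, Hs H -> subgroup H) /\
  (forall H1 H2, Hs H1 -> Hs H2 -> exists g, H2 = conj_set H1 g) /\
  (forall i, (0 < z i)%N) /\
  Rec Gm (scale_rad 3 z) `<=` Rec Gm dom /\
  (forall r s, Rec Gm dom r -> Rec Gm dom s -> phi r = phi s -> r = s) /\
  phi (vzero l Gm) = 1%g /\
  (forall r s H, Rec Gm dom r -> Rec Gm dom s -> Hs H ->
     (lcoset (phi r) H = lcoset (phi s) H -> r = s) /\
     (vtrans (vadd r s) (Rec Gm z) `<=` Rec Gm dom ->
        exists2 w, Rec Gm z w &
          lcoset (phi r * phi s)%g H = lcoset (phi (vadd (vadd r s) w)) H) /\
     (vtrans (vsub r s) (Rec Gm z) `<=` Rec Gm dom ->
        exists2 w, Rec Gm z w &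
          lcoset (phi r * (phi s)^-1)%g H = lcoset (phi (vadd (vsub r s) w)) H) /\
     (vtrans (vadd (vopp r) s) (Rec Gm z) `<=` Rec Gm dom ->
        exists2 w, Rec Gm z w &
          lcoset ((phi r)^-1 * phi s)%g H = lcoset (phi (vadd (vadd (vopp r) s) w)) H) /\
     (vtrans (vopp s) (Rec Gm z) `<=` Rec Gm dom ->
        exists2 w, Rec Gm z w &
          lcoset ((phi s)^-1)%g H = lcoset (phi (vadd (vopp s) w)) H)).

Definition is_equivalence (X : Type) (E : X -> X -> Prop) : Prop :=
  (forall x, E x x) /\ (forall x y, E x y -> E y x) /\
  (forall x y z, E x y -> E y z -> E x z).

Definition saturation (X : Type) (E : X -> X -> Prop) (Y : set X) : set X :=
  [set x' | exists2 y, Y y & E y x'].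

Definition G_clopen (G : groupType) (X : topologicalType) (act : G -> X -> X)
    (E : X -> X -> Prop) : Prop :=
  forall g, clopen [set x | E x (act g x)].

Definition phi_act (G : groupType) (X : Type) (act : G -> X -> X) l (Gm : finZmodType)
    (phi : vec l Gm -> G) (S : set (vec l Gm)) (x : X) : set X :=
  [set act (phi s) x | s in S].

Definition boundary (G : groupType) (X : Type) (act : G -> X -> X) l (Gm : finZmodType)
    (phi : vec l Gm -> G) (Hs : set (set G)) (E : X -> X -> Prop)
    (a : 'I_l -> nat) (i : 'I_l) : set X :=
  [set x | XH act Hs x /\
     saturation E (phi_act act phi
        (vtrans (vopp (vei Gm (a i) i)) (Rec Gm (drop_rad a i))) x)
     `&` saturation E (phi_act act phi
        (vtrans (vei Gm (a i) i) (Rec Gm (drop_rad a i))) x) = set0].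

Arguments boundary {G X} act {l Gm} phi Hs E a i.
Arguments phi_act {G X} act {l Gm} phi S x.
Arguments is_chart {G l Gm} phi dom z Hs.
Arguments XH {G X} act Hs.
Arguments G_clopen {G X} act E.
Arguments continuous_action {G X} act.
Arguments is_equivalence {X} E.
Arguments saturation {X} E Y.
Arguments stab {G X} act x.

From HB Require Import structures.
From mathcomp Require Import all_boot all_order all_algebra.
From mathcomp Require Import all_classical topology.
From mathcomp Require Import zify.

Set Implicit Arguments.
Unset Strict Implicit.
Unset Printing Implicit Defensive.

Import Order.TTheory GRing.Theory Num.Theory.

Local Open Scope classical_set_scope.

(* The two saturations in the definition of the boundary are disjoint exactly
   when no point of phi(A^i - L_i e_i).x is E-related to a point of
   phi(A^i + L_i e_i).x.  Both rectangles are finite, so the boundary is X^H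
   minus a finite union of sets [x | E (g x) (h x)]; each of these is the
   preimage of the clopen set [y | E y (h g^-1 y)] under the continuous map g. *)

Lemma finite_Rec l (Gm : finZmodType) (b : 'I_l -> nat) : finite_set (Rec Gm b).
Proof.
set M := (\max_j b j)%N.
have b_le_M j : (b j <= M)%N by exact: leq_bigmax.
pose shift (p : {ffun 'I_l -> 'I_(M + M).+1} * Gm) : vec l Gm :=
  ([ffun j => ((p.1 j : nat)%:Z - M%:Z)%R], p.2).
apply: (@sub_finite_set _ _ (shift @` setT)).
  move=> [v1 v2] Hv; exists ([ffun j => inord (absz (v1 j + M%:Z)%R)], v2) => //.
  congr (_, _); apply/ffunP => j; rewrite !ffunE /=.
  have [lo hi] := Hv j; have := b_le_M j; rewrite /= in lo hi; clearbody M => bjM.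
  rewrite inordK; last by lia.
  by rewrite gez0_abs; lia.
exact/finite_image/finite_finset.
Qed.

Lemma clopen_bigcup (T : topologicalType) (I : choiceType) (A : set I)
    (F : I -> set T) :
  finite_set A -> (forall i, A i -> clopen (F i)) -> clopen (\bigcup_(i in A) F i).
Proof.
move=> finA cF; split; first by apply: bigcup_open => i /cF [].
by apply: closed_bigcup => // i /cF [].
Qed.

Lemma saturation_disjointP (X : Type) (E : X -> X -> Prop) {Y Z : set X} :
  is_equivalence E ->
  (saturation E Y `&` saturation E Z = set0 <->
   forall y z, Y y -> Z z -> ~ E y z).
Proof.
move=> [Erefl [Esym Etrans]]; split.
  move=> YZ0 y z Yy Zz Eyz; suff : (set0 : set X) z by [].
  by rewrite -YZ0; split; [exists y | exists z].
move=> noE; apply/seteqP; split => // x [[y Yy Eyx] [z Zz Ezx]].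
exact: noE Yy Zz (Etrans _ _ _ Eyx (Esym _ _ Ezx)).
Qed.

Lemma clopen_equiv_translates (G : groupType) (X : topologicalType)
    (act : G -> X -> X) (E : X -> X -> Prop) (g h : G) :
  continuous_action act -> G_clopen act E ->
  clopen [set x | E (act g x) (act h x)].
Proof.
move=> [_ [actM actC]] cE.
have -> : [set x | E (act g x) (act h x)] =
    act g @^-1` [set y | E y (act (h * g^-1)%g y)].
  by apply/seteqP; split => x /=; rewrite -actM -mulgA mulVg mulg1.
exact: preimage_clopen.
Qed.

Theorem lemma6p2 (G : groupType) (X : topologicalType) (act : G -> X -> X)
    (l : nat) (Gm : finZmodType) (phi : vec l Gm -> G) (dom z : 'I_l -> nat)
    (Hs : set (set G)) (E : X -> X -> Prop) :
  countable [set: G] ->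
  polish_space X ->
  continuous_action act ->
  is_chart phi dom z Hs ->
  is_equivalence E ->
  clopen (XH act Hs) ->
  G_clopen act E ->
  forall (a : 'I_l -> nat) (i : 'I_l),
    Rec Gm a `<=` Rec Gm dom ->
    clopen (boundary act phi Hs E a i).
Proof.
move=> _ _ cact _ Eeq cXH cE a i _.
set Aminus := vtrans (vopp (vei Gm (a i) i)) (Rec Gm (drop_rad a i)).
set Aplus := vtrans (vei Gm (a i) i) (Rec Gm (drop_rad a i)).
pose related (p : vec l Gm * vec l Gm) :=
  [set x | E (act (phi p.1) x) (act (phi p.2) x)].
have -> : boundary act phi Hs E a i =
    XH act Hs `&` ~` \bigcup_(p in Aminus `*` Aplus) related p.
  apply/seteqP; split => x [XHx disj]; split => //.
    move/(saturation_disjointP Eeq): disj => noE [[s t] [/= As At] Est].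
    by apply: noE Est; [exists s | exists t].
  apply/(saturation_disjointP Eeq) => _ _ [s As <-] [t At <-] Est.
  by apply: disj; exists (s, t).
apply: clopenI => //; apply: (@clopenC _ _ set0).
apply: clopen_bigcup => [|p _]; last exact: (clopen_equiv_translates _ _ cact cE).
by apply: finite_setX; apply: finite_image; exact: finite_Rec.
Qed.
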